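(* Let $R=R_1\times\cdots\times R_t$, where each $R_i$ is a finite local Frobenius ring with residue field $R_i/\mathrm{rad}(R_i)$ of order $q$ (the same $q$ for all $i$). Then the normalized homogeneous weight on $R$ is $$\omega(a)=\begin{cases}1-\left(\dfrac{-1}{q-1}\right)^{\mathrm{wt}(a)}, & a\in\mathrm{soc}(R),\\[1ex] 1,& a\notin\mathrm{soc}(R),\end{cases}$$ where $\mathrm{wt}(a)=|\{i: a_i\neq0\}|$ is the Hamming weight of $a=(a_1,\dots,a_t)$.
   Context: A finite ring is Frobenius if it admits a generating character (a character $\chi$ of $(R,+)$ such that $r\mapsto(x\mapsto\chi(xr))$ is a bijection $R\to\widehat R$). A local ring has $\mathrm{rad}(R)$ (Jacobson radical) as unique maximal left ideal. $\mathrm{soc}(R)$ is the socle; for a product, $\mathrm{soc}(R_1\times\cdots\times R_t)=\mathrm{soc}(R_1)\times\cdots\times\mathrm{soc}(R_t)$. The normalized homogeneous weight on a finite Frobenius ring $S$ is the unique $\omega:S\to\mathbb Q$ with $\omega(0)=0$, $\omega(x)=\omega(y)$ whenever $Sx=Sy$, and $\sum_{y\in Sx}\omega(y)=|Sx|$ for all $x\ne0$. *)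

From HB Require Import structures.
From mathcomp Require Import all_boot all_order all_algebra all_field.
Set Implicit Arguments. Unset Strict Implicit. Unset Printing Implicit Defensive.
Import Order.TTheory GRing.Theory Num.Theory.
Local Open Scope ring_scope.

Section RingNotions.
Variable R : finNzRingType.

Definition left_ideal (I : {set R}) : bool :=
  [&& 0 \in I,
      [forall x, forall y, (x \in I) ==> (y \in I) ==> (x + y \in I)] &
      [forall r, forall x, (x \in I) ==> (r * x \in I)]].

Definition proper_left_ideal (I : {set R}) : bool :=
  left_ideal I && (I != [set: R]).

Definition maximal_left_ideal (I : {set R}) : bool :=
  proper_left_ideal I &&
  [forall J : {set R}, (proper_left_ideal J && (I \subset J)) ==> (J == I)].

(* local: a unique maximal left ideal M (then M = rad R) *)
Definition local_with_max (M : {set R}) : Prop :=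
  maximal_left_ideal M /\ forall J, maximal_left_ideal J -> J = M.

Definition minimal_left_ideal (I : {set R}) : bool :=
  [&& left_ideal I, I != [set 0] &
      [forall J : {set R}, (left_ideal J && (J \subset I)) ==> (J == [set 0]) || (J == I)]].

(* (left) socle: the sum of the minimal left ideals, i.e. the smallest left
   ideal containing all of them *)
Definition socle : {set R} :=
  \bigcap_(I : {set R} | left_ideal I &&
      [forall J : {set R}, minimal_left_ideal J ==> (J \subset I)]) I.

Definition is_character (chi : R -> algC) : Prop :=
  chi 0 = 1 /\ forall x y, chi (x + y) = chi x * chi y.

(* generating character: r |-> (x |-> chi (x r)) is a bijection R -> R^ *)
Definition generating_character (chi : R -> algC) : Prop :=
  is_character chi /\
  (forall r s : R, (forall x, chi (x * r) = chi (x * s)) -> r = s) /\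
  (forall psi, is_character psi -> exists r : R, forall x, psi x = chi (x * r)).

Definition frobenius : Prop := exists chi, generating_character chi.

End RingNotions.

Section Product.
Variables (t : nat) (R_ : 'I_t -> finNzRingType).

Definition prodR := {dffun forall i : 'I_t, R_ i}.

Definition pzero : prodR := @finfun _ (fun i => R_ i) (fun i => 0).

Definition pmul (r x : prodR) : prodR := @finfun _ (fun i => R_ i) (fun i => r i * x i).

Definition lideal_gen (x : prodR) : {set prodR} := [set pmul r x | r : prodR].

(* soc(R_1 x ... x R_t) = soc(R_1) x ... x soc(R_t) *)
Definition psocle : {set prodR} := [set a : prodR | [forall i, a i \in socle (R_ i)]].

Definition hwt (a : prodR) : nat := #|[set i : 'I_t | a i != 0]|.

Definition normalized_homogeneous_weight (w : prodR -> rat) : Prop :=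
  [/\ w pzero = 0,
      (forall x y, lideal_gen x = lideal_gen y -> w x = w y) &
      (forall x, x != pzero -> \sum_(y in lideal_gen x) w y = (#|lideal_gen x|)%:R)].

End Product.

(* Let R be finite local with maximal left ideal M, generating
   character chi and |R| = q|M|, and let A = {r | M r = 0}.  Fourier analysis
   of the indicator of A with respect to chi gives |A| <= q.  A minimal left
   ideal J is generated by any z <> 0 in it; it lies in A (if m z <> 0 then
   z = r m z, so 1 - r m annihilates z and 1 would lie in M), and
   |R| <= |Rz| |ann z| <= |J| |M| gives |J| >= q.  So A is the unique minimal
   left ideal, soc R = A has q elements, and soc R lies in Rx for all x <> 0.

   Write w(a) = 1 - prod_i g_i(a_i) with g_i(0) = 1,
   g_i = -1/(q-1) on soc(R_i) minus 0 and g_i = 0 off soc(R_i).  The sum of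
   g_i over R_i x vanishes for x <> 0.  For x <> 0 in R pick i with x_i <> 0;
   fibering Rx over the i-th coordinate, all fibres over R_i x_i are
   translates of each other, so the sum of prod_i g_i over Rx vanishes and
   w sums to |Rx| on Rx.  Finally a normalized homogeneous weight is unique,
   by strong induction on |Rx|. *)

From HB Require Import structures.
From mathcomp Require Import all_boot all_order all_algebra all_field.
Import Order.TTheory GRing.Theory Num.Theory.
Local Open Scope ring_scope.
Set Implicit Arguments. Unset Strict Implicit. Unset Printing Implicit Defensive.

(* The sum of a nontrivial multiplicative function of an additive subgroup
   vanishes: translating by an element a with psi a <> 1 rescales it by psi a. *)
Lemma sum_nontrivial_character (V : finZmodType) (F : idomainType)
    (G : {set V}) (psi : V -> F) a :
  (forall u v, psi (u + v) = psi u * psi v) ->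
  (forall u v, u \in G -> v \in G -> u + v \in G) ->
  (forall u v, u \in G -> v \in G -> u - v \in G) ->
  a \in G -> psi a != 1 -> \sum_(r in G) psi r = 0.
Proof.
move=> psiD addG subG aG psia.
have scaled : \sum_(r in G) psi r = psi a * \sum_(r in G) psi r.
  rewrite {1}(reindex (fun r => a + r)) /=; last first.
    by apply: onW_bij; exists (fun r => - a + r) => r; [apply: addKr | apply: addNKr].
  rewrite mulr_sumr; apply: eq_big => [r|r _]; last by rewrite psiD.
  apply/idP/idP => [arG|]; last exact: addG.
  by rewrite -(addKr a r) addrC; apply: subG.
have : (1 - psi a) * \sum_(r in G) psi r = 0 by rewrite mulrBl mul1r -scaled subrr.
by move/eqP; rewrite mulf_eq0 subr_eq0 eq_sym (negPf psia) => /eqP.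
Qed.

Section LeftIdeals.
Variable R : finNzRingType.
Implicit Types (I J K : {set R}) (x y z r : R).

Lemma left_idealP I : left_ideal I -> [/\ 0 \in I,
  forall x y, x \in I -> y \in I -> x + y \in I & forall r x, x \in I -> r * x \in I].
Proof.
case/and3P => I0 /forallP addI /forallP mulI; split => // [x y xI yI | r x xI].
  by have := forallP (addI x) y; rewrite xI yI.
by have := forallP (mulI r) x; rewrite xI.
Qed.

Lemma left_idealW I : 0 \in I -> (forall x y, x \in I -> y \in I -> x + y \in I) ->
  (forall r x, x \in I -> r * x \in I) -> left_ideal I.
Proof.
move=> I0 addI mulI; apply/and3P; split=> //; apply/forallP=> x; apply/forallP=> y;
  apply/implyP=> xI; [apply/implyP=> yI; exact: addI | exact: mulI].
Qed.

Lemma left_idealT : left_ideal [set: R].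
Proof. by apply: left_idealW => *; rewrite inE. Qed.

Lemma left_ideal_nonzero I : left_ideal I -> I != [set 0] -> exists2 y, y \in I & y != 0.
Proof.
move=> lI nI; have [/existsP[y /andP[]]|/existsPn noy] := boolP [exists y in I, y != 0].
  by exists y.
case/eqP: nI; apply/setP => y; rewrite inE; apply/idP/eqP => [yI|->].
  by move: (noy y); rewrite yI /= negbK => /eqP.
by case: (left_idealP lI).
Qed.

Definition lann y := [set r | r * y == 0].
Definition lgen x := [set r * x | r : R].

Lemma lann_left_ideal y : left_ideal (lann y).
Proof.
apply: left_idealW => [|a b|r a]; rewrite !inE ?mul0r //.
  by rewrite mulrDl => /eqP-> /eqP->; rewrite addr0.
by rewrite -mulrA => /eqP->; rewrite mulr0.
Qed.

Lemma lgenP x z : reflect (exists r, z = r * x) (z \in lgen x).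
Proof. by apply: (iffP imsetP) => [[r _ ->]|[r ->]]; exists r. Qed.

Lemma mem_lgen x r : r * x \in lgen x.
Proof. exact: imset_f. Qed.

Lemma lgen_self x : x \in lgen x.
Proof. by rewrite -{1}(mul1r x) mem_lgen. Qed.

Lemma lgen_left_ideal x : left_ideal (lgen x).
Proof.
apply: left_idealW => [|a b|r a]; first by rewrite -(mul0r x) mem_lgen.
  by move=> /lgenP[r ->] /lgenP[s ->]; rewrite -mulrDl mem_lgen.
by move=> /lgenP[s ->]; rewrite mulrA mem_lgen.
Qed.

Lemma lgen_neq0 x : x != 0 -> lgen x != [set 0].
Proof. by apply: contraNneq => h; have := lgen_self x; rewrite h inE. Qed.

Lemma lgen_min I x : left_ideal I -> x \in I -> lgen x \subset I.
Proof. by case/left_idealP=> _ _ mulI xI; apply/subsetP=> z /lgenP[r ->]; apply: mulI. Qed.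

(* The fibres of r |-> r y are cosets of ann y, hence |R| <= |R y| |ann y|. *)
Lemma card_lgen_lann y : (#|[set: R]| <= #|lgen y| * #|lann y|)%N.
Proof.
rewrite -sum1_card (partition_big (fun r => r * y) (mem (lgen y))) /=; last first.
  by move=> r _; apply: mem_lgen.
rewrite -sum_nat_const leq_sum // => z /lgenP[r0 ->].
rewrite (eq_bigl (mem [set r | r * y == r0 * y])); last by move=> r; rewrite !inE.
rewrite sum1_card -(card_imset _ (subIr r0)).
apply: subset_leq_card; apply/subsetP=> u /imsetP[r]; rewrite inE => /eqP ry ->.
by rewrite inE mulrBl ry subrr.
Qed.

Lemma ex_maximal_left_ideal I :
  proper_left_ideal I -> exists2 J, maximal_left_ideal J & I \subset J.
Proof.
have [n] := ubnP (#|[set: R]| - #|I|)%N; elim: n I => // n IH I In pI.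
have [mI|] := boolP (maximal_left_ideal I); first by exists I.
rewrite /maximal_left_ideal pI /= negb_forall => /existsP[J].
rewrite negb_imply => /andP[/andP[pJ sIJ] nJI].
have ltIJ : (#|I| < #|J|)%N by apply: proper_card; rewrite properEneq eq_sym nJI.
have leJ : (#|J| <= #|[set: R]|)%N by apply/subset_leq_card/subsetT.
have [|K mK sJK] := IH J _ pJ; last by exists K; rewrite ?(subset_trans sIJ).
by rewrite -ltnS (leq_trans _ In) // ltnS ltn_sub2l // (leq_trans ltIJ).
Qed.

Lemma minimal_left_idealP J : reflect
  [/\ left_ideal J, J != [set 0] &
      forall K, left_ideal K -> K \subset J -> K != [set 0] -> K = J]
  (minimal_left_ideal J).
Proof.
apply: (iffP and3P) => [[lJ nJ /forallP minJ]|[lJ nJ minJ]]; split => //.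
  move=> K lK sKJ nK; apply/eqP.
  by have := minJ K; rewrite lK sKJ /= (negPf nK).
apply/forallP => K; apply/implyP => /andP[lK sKJ].
by have [->|nK] := eqVneq K [set 0]; rewrite ?eqxx // (minJ K lK sKJ nK) eqxx orbT.
Qed.

Lemma ex_minimal_left_ideal I : left_ideal I -> I != [set 0] ->
  exists2 J, minimal_left_ideal J & J \subset I.
Proof.
have [n] := ubnP #|I|; elim: n I => // n IH I In lI nI.
have [/existsP[K /and4P[lK sKI nK nKI]] | /existsPn noK] :=
  boolP [exists K, [&& left_ideal K, K \subset I, K != [set 0] & K != I]].
  have ltKI : (#|K| < #|I|)%N by apply: proper_card; rewrite properEneq nKI.
  have [|J mJ sJK] := IH K _ lK nK; first exact: leq_trans ltKI _.
  by exists J; rewrite ?(subset_trans sJK).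
exists I => //; apply/minimal_left_idealP; split => // K lK sKI nK.
by apply/eqP; move: (noK K); rewrite lK sKI nK /= negbK.
Qed.

Lemma socle_unique_minimal A : minimal_left_ideal A ->
  (forall I, left_ideal I -> I != [set 0] -> A \subset I) -> socle R = A.
Proof.
move=> mA inI; have /minimal_left_idealP[lA nA _] := mA.
have minA J : minimal_left_ideal J -> J \subset A.
  case/minimal_left_idealP => lJ nJ minJ.
  by rewrite -(minJ A lA (inI J lJ nJ) nA).
apply/eqP; rewrite eqEsubset; apply/andP; split.
  apply: (bigcap_inf (F := id) _ _).
  by rewrite lA /=; apply/forallP => J; apply/implyP; apply: minA.
by apply/bigcapsP => I /andP[_ /forallP/(_ A)]; rewrite mA.
Qed.

End LeftIdeals.

Section LocalRing.
Variables (R : finNzRingType) (M : {set R}).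
Hypothesis HM : local_with_max M.
Implicit Types (I : {set R}) (y : R).

Lemma max_left_ideal : left_ideal M.
Proof. by case: HM => /andP[/andP[]]. Qed.

Lemma proper_sub_max I : proper_left_ideal I -> I \subset M.
Proof. by case/ex_maximal_left_ideal=> J mJ sIJ; rewrite -(proj2 HM J mJ). Qed.

Lemma one_notin_max : (1 : R) \notin M.
Proof.
apply/negP=> M1; case: HM => /andP[/andP[_ /negP]] + _ _; apply.
by apply/eqP/setP=> r; rewrite inE -(mulr1 r); case: (left_idealP max_left_ideal) => _ _ ->.
Qed.

Lemma lann_sub_max y : y != 0 -> lann y \subset M.
Proof.
move=> y0; apply: proper_sub_max; rewrite /proper_left_ideal lann_left_ideal /=.
by apply: contraNneq y0 => annT; have := in_setT (1 : R); rewrite -annT inE mul1r.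
Qed.

Lemma card_max_gt0 : (0 < #|M|)%N.
Proof. by apply/card_gt0P; exists 0; case: (left_idealP max_left_ideal). Qed.

Definition rann_max := [set r | [forall m in M, m * r == 0]].

Lemma rann_maxP r : reflect (forall m, m \in M -> m * r = 0) (r \in rann_max).
Proof.
rewrite inE; apply: (iffP forallP) => [Mr m mM|Mr m]; last first.
  by apply/implyP => /Mr/eqP.
by move: (Mr m); rewrite mM => /eqP.
Qed.

Lemma rann_max0 : 0 \in rann_max.
Proof. by apply/rann_maxP => m _; rewrite mulr0. Qed.

Lemma rann_maxD u v : u \in rann_max -> v \in rann_max -> u + v \in rann_max.
Proof. by move=> /rann_maxP Mu /rann_maxP Mv; apply/rann_maxP => m mM; rewrite mulrDr Mu ?Mv ?addr0. Qed.

Lemma rann_maxB u v : u \in rann_max -> v \in rann_max -> u - v \in rann_max.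
Proof. by move=> /rann_maxP Mu /rann_maxP Mv; apply/rann_maxP => m mM; rewrite mulrBr Mu ?Mv ?subr0. Qed.

(* A minimal left ideal lies in rann_max: if m z <> 0 for some m in M, then
   z = r m z by minimality, so 1 - r m is in ann z, inside M, and 1 in M. *)
Lemma minimal_sub_rann_max J : minimal_left_ideal J -> J \subset rann_max.
Proof.
case/minimal_left_idealP => lJ _ minJ; have [_ _ mulJ] := left_idealP lJ.
have [_ addM mulM] := left_idealP max_left_ideal.
apply/subsetP => z zJ; apply/rann_maxP => m mM.
have [->|z0] := eqVneq z 0; first by rewrite mulr0.
apply: contraNeq one_notin_max => mz0.
have lgen_mz : lgen (m * z) = J.
  by apply: minJ; rewrite ?lgen_left_ideal ?lgen_neq0 ?lgen_min ?mulJ.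
have /lgenP[r zE] : z \in lgen (m * z) by rewrite lgen_mz.
have : 1 - r * m \in lann z by rewrite inE mulrBl mul1r -mulrA -zE subrr.
by move/(subsetP (lann_sub_max z0)) => /addM /(_ (mulM r m mM)); rewrite subrK.
Qed.

End LocalRing.

Section LocalFrobenius.
Variables (R : finNzRingType) (M : {set R}) (chi : R -> algC) (q : nat).
Hypothesis HM : local_with_max M.
Hypothesis Hchi : generating_character chi.
Hypothesis Hq : #|[set: R]| = (q * #|M|)%N.

Implicit Types (I J : {set R}) (x r : R).

Let A := rann_max M.

Let chi0 : chi 0 = 1.
Proof. by case: Hchi => [[]]. Qed.

Let chiD a b : chi (a + b) = chi a * chi b.
Proof. by case: Hchi => [[_ ->]]. Qed.

(* Injectivity of r |-> chi(_ r): the character x |-> chi (x r) is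
   nontrivial for r <> 0. *)
Lemma generating_character_nontrivial r : r != 0 -> exists x, chi (x * r) != 1.
Proof.
move=> r0; case: Hchi => _ [inj _].
have [/existsP//|/existsPn chi_r] := boolP [exists x, chi (x * r) != 1].
case/eqP: r0; apply: inj => x; rewrite mulr0 chi0.
by apply/eqP; move: (chi_r x); rewrite negbK.
Qed.

(* the Fourier transform of the indicator of A with respect to chi *)
Definition rann_transform x := \sum_(r in A) chi (x * r).

(* It is |A| or 0 according as x |-> chi (x _) is trivial on A or not. *)
Lemma rann_transform_ge0 x : 0 <= rann_transform x.
Proof.
have [/existsP[a /andP[aA chia]]|/existsPn chiA] :=
  boolP [exists r in A, chi (x * r) != 1].
  rewrite /rann_transform (sum_nontrivial_character (psi := fun r => chi (x * r))
    _ (@rann_maxD _ M) (@rann_maxB _ M) aA chia) //.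
  by move=> u v; rewrite mulrDr chiD.
rewrite /rann_transform (eq_bigr (fun _ => 1)) ?sumr_const ?ler0n // => r rA.
by apply/eqP; move: (chiA r); rewrite rA negbK.
Qed.

Lemma rann_transform_max x : x \in M -> rann_transform x = #|A|%:R.
Proof.
move=> xM; rewrite /rann_transform (eq_bigr (fun _ => 1)) ?sumr_const //.
by move=> r /rann_maxP/(_ x xM) ->.
Qed.

(* Orthogonality: only r = 0 contributes to the total sum. *)
Lemma sum_rann_transform : \sum_(x in [set: R]) rann_transform x = #|[set: R]|%:R.
Proof.
rewrite exchange_big /= (bigD1 0) ?rann_max0 //= [X in _ + X]big1 ?addr0.
  by rewrite (eq_bigr (fun _ => 1)) ?sumr_const // => x _; rewrite mulr0 chi0.
move=> r /andP[_ r0]; have [x chix] := generating_character_nontrivial r0.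
apply: (sum_nontrivial_character (psi := fun x => chi (x * r)) _ _ _ (in_setT x) chix).
- by move=> u v; rewrite mulrDl chiD.
- by move=> *; rewrite inE.
- by move=> *; rewrite inE.
Qed.

(* Summing the transform over M alone: |M| |A| <= |R| = q |M|. *)
Lemma card_rann_max_le : (#|A| <= q)%N.
Proof.
have : (#|M| * #|A|)%:R <= (q * #|M|)%:R :> algC.
  rewrite -Hq -sum_rann_transform (big_setID M) setTI /=.
  rewrite -[X in X <= _]addr0 lerD ?sumr_ge0 // => [|x _]; last exact: rann_transform_ge0.
  by rewrite (eq_bigr _ rann_transform_max) sumr_const natrM mulr_natl.
by rewrite ler_nat mulnC leq_pmul2r // card_max_gt0.
Qed.

(* A minimal left ideal J = R z satisfies |R| <= |J| |ann z| <= |J| |M|. *)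
Lemma card_minimal_ge J : minimal_left_ideal J -> (q <= #|J|)%N.
Proof.
case/minimal_left_idealP => lJ nJ minJ; have [z zJ z0] := left_ideal_nonzero lJ nJ.
have lgen_z : lgen z = J by apply: minJ; rewrite ?lgen_left_ideal ?lgen_neq0 ?lgen_min.
have := card_lgen_lann z; rewrite Hq lgen_z => /leq_trans/(_ _)-le_qJ.
rewrite -(leq_pmul2r (card_max_gt0 HM)) le_qJ // leq_mul2l.
by rewrite subset_leq_card ?orbT // lann_sub_max.
Qed.

Lemma minimal_eq_rann_max J : minimal_left_ideal J -> J = A /\ #|J| = q.
Proof.
move=> mJ; have le_qJ := card_minimal_ge mJ.
have le_JA := subset_leq_card (minimal_sub_rann_max HM mJ).
have le_Aq := card_rann_max_le.
have cJ : #|J| = q by apply/eqP; rewrite eqn_leq le_qJ (leq_trans le_JA).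
by split => //; apply/eqP; rewrite eqEcard minimal_sub_rann_max // cJ.
Qed.

Lemma local_frobenius_socle : [/\ left_ideal (socle R), #|socle R| = q, (1 < q)%N &
  forall x, x != 0 -> socle R \subset lgen x].
Proof.
have nT : [set: R] != [set 0].
  by apply/eqP=> T0; have := in_setT (1 : R); rewrite T0 inE oner_eq0.
have [J mJ _] := ex_minimal_left_ideal (left_idealT R) nT.
have [JA cJ] := minimal_eq_rann_max mJ.
have J_in I : left_ideal I -> I != [set 0] -> J \subset I.
  move=> lI nI; have [K mK sKI] := ex_minimal_left_ideal lI nI.
  by rewrite JA -(proj1 (minimal_eq_rann_max mK)).
have socJ := socle_unique_minimal mJ J_in; rewrite socJ.
have /minimal_left_idealP[lJ nJ _] := mJ; split => //.
  have [y yJ y0] := left_ideal_nonzero lJ nJ; rewrite -cJ.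
  have sub2 : [set 0; y] \subset J.
    by apply/subsetP => z /set2P[]->; rewrite ?yJ //; case: (left_idealP lJ).
  by have := subset_leq_card sub2; rewrite cards2 eq_sym y0.
by move=> x x0; rewrite J_in ?lgen_left_ideal ?lgen_neq0.
Qed.

End LocalFrobenius.

Section Product.
Variables (t : nat) (R_ : 'I_t -> finNzRingType).
Implicit Types (x y a : prodR R_).

Lemma pmulE r x i : pmul r x i = r i * x i.
Proof. by rewrite ffunE. Qed.

Lemma lideal_genP x y : reflect (exists r, y = pmul r x) (y \in lideal_gen x).
Proof. by apply: (iffP imsetP) => [[r _ ->]|[r ->]]; exists r. Qed.

Lemma lideal_gen_self x : x \in lideal_gen x.
Proof.
apply/lideal_genP; exists (@finfun _ (fun i => R_ i) (fun i => 1)).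
by apply/ffunP => i; rewrite pmulE ffunE mul1r.
Qed.

Lemma lideal_gen_sub x y : y \in lideal_gen x -> lideal_gen y \subset lideal_gen x.
Proof.
case/lideal_genP => r ->; apply/subsetP => z /lideal_genP[s ->]; apply/lideal_genP.
by exists (pmul s r); apply/ffunP => i; rewrite !pmulE mulrA.
Qed.

(* A normalized homogeneous weight is unique: on R a its values are fixed by
   the normalization, the values on the strictly smaller ideals R y (known by
   induction on |R a|), and the constancy on the generators of R a. *)
Lemma normalized_homogeneous_weight_unique (w1 w2 : prodR R_ -> rat) :
  normalized_homogeneous_weight w1 -> normalized_homogeneous_weight w2 ->
  forall a, w1 a = w2 a.
Proof.
case=> w1_0 w1_gen w1_sum [w2_0 w2_gen w2_sum] a.
have [n] := ubnP #|lideal_gen a|; elim: n a => // n IH a an.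
have [->|a0] := eqVneq a (pzero R_); first by rewrite w1_0 w2_0.
pose E := [set y in lideal_gen a | lideal_gen y == lideal_gen a].
have sum_smaller : \sum_(y in lideal_gen a :\: E) w1 y = \sum_(y in lideal_gen a :\: E) w2 y.
  apply: eq_bigr => y; rewrite !inE => /andP[+ ya]; rewrite ya /= => neq_ya.
  apply: IH; rewrite -ltnS (leq_trans _ an) // ltnS proper_card //.
  by rewrite properEneq neq_ya lideal_gen_sub.
have sum_generators (w : prodR R_ -> rat) :
    (forall x y, lideal_gen x = lideal_gen y -> w x = w y) ->
    \sum_(y in lideal_gen a :&: E) w y = w a *+ #|lideal_gen a :&: E|.
  move=> w_gen; rewrite -sumr_const; apply: eq_bigr => y.
  by rewrite !inE => /andP[_ /andP[_ /eqP]]; apply: w_gen.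
have nE : (#|lideal_gen a :&: E|%:R : rat) != 0.
  rewrite pnatr_eq0 -lt0n; apply/card_gt0P; exists a.
  by rewrite !inE lideal_gen_self eqxx.
have := w1_sum a a0; rewrite -(w2_sum a a0) (big_setID E) [in RHS](big_setID E) /=.
rewrite sum_smaller (sum_generators _ w1_gen) (sum_generators _ w2_gen) => /addIr.
by rewrite -[w1 a *+ _]mulr_natr -[w2 a *+ _]mulr_natr => /(mulIf nE).
Qed.

Definition padd x y : prodR R_ := @finfun _ (fun i => R_ i) (fun i => x i + y i).
Definition psub x y : prodR R_ := @finfun _ (fun i => R_ i) (fun i => x i - y i).
Definition single i0 (s : R_ i0) : prodR R_ :=
  @finfun _ (fun i => R_ i) (dfwith (fun j => (0 : R_ j)) s).

Lemma single_in i0 (s : R_ i0) : single s i0 = s.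
Proof. by rewrite ffunE dfwith_in. Qed.

Lemma single_out i0 (s : R_ i0) j : i0 != j -> single s j = 0.
Proof. by move=> ne; rewrite ffunE dfwith_out. Qed.

Lemma lideal_genD x y e :
  y \in lideal_gen x -> e \in lideal_gen x -> padd y e \in lideal_gen x.
Proof.
move=> /lideal_genP[r ->] /lideal_genP[s ->]; apply/lideal_genP; exists (padd r s).
by apply/ffunP => i; rewrite !ffunE mulrDl.
Qed.

Lemma lideal_genB x y e :
  y \in lideal_gen x -> e \in lideal_gen x -> psub y e \in lideal_gen x.
Proof.
move=> /lideal_genP[r ->] /lideal_genP[s ->]; apply/lideal_genP; exists (psub r s).
by apply/ffunP => i; rewrite !ffunE mulrBl.
Qed.

Section Fibres.
Variables (x : prodR R_) (i0 : 'I_t) (V : nmodType) (Q : prodR R_ -> V).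
Hypothesis Q_off_i0 : forall y y', (forall j, j != i0 -> y j = y' j) -> Q y = Q y'.

Definition fibre_sum (z : R_ i0) := \sum_(y in lideal_gen x | y i0 == z) Q y.

(* For z = s x_i0, translation by single s * x maps the fibre over 0 onto the
   fibre over z, and Q ignores the coordinate i0. *)
Lemma fibre_sum_lgen z : z \in lgen (x i0) -> fibre_sum z = fibre_sum 0.
Proof.
case/lgenP => s zE; pose e := pmul (single s) x.
have eL : e \in lideal_gen x by apply/lideal_genP; exists (single s).
have e_i0 : e i0 = z by rewrite pmulE single_in zE.
rewrite /fibre_sum (reindex (padd ^~ e)) /=; last first.
  by apply: onW_bij; exists (psub ^~ e) => y; apply/ffunP => i; rewrite !ffunE ?addrK ?subrK.
apply: eq_big => [y|y _].
  rewrite ffunE e_i0 -{2}(add0r z) (inj_eq (addIr z)); congr (_ && _).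
  apply/idP/idP => [yeL|/lideal_genD]; last exact.
  have -> : y = psub (padd y e) e by apply/ffunP => i; rewrite !ffunE addrK.
  exact: lideal_genB.
by apply: Q_off_i0 => j ne; rewrite ffunE pmulE single_out ?mul0r ?addr0 // eq_sym.
Qed.

Lemma fibre_sum_out z : z \notin lgen (x i0) -> fibre_sum z = 0.
Proof.
move=> zx; apply: big_pred0 => y; apply/negbTE/andP => -[/lideal_genP[r ->] /eqP ryz].
by move: zx; rewrite -ryz pmulE mem_lgen.
Qed.

End Fibres.

(* If f sums to 0 over R_i0 x_i0, then y |-> f y_i0 * Q y sums to 0 over R x
   whenever Q ignores the coordinate i0: group the sum by fibres over i0. *)
Lemma sum_lideal_gen_factor (F : pzRingType) x i0 (f : R_ i0 -> F) (Q : prodR R_ -> F) :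
  (forall y y', (forall j, j != i0 -> y j = y' j) -> Q y = Q y') ->
  \sum_(z in lgen (x i0)) f z = 0 ->
  \sum_(y in lideal_gen x) f (y i0) * Q y = 0.
Proof.
move=> Q_off_i0 f0; rewrite (partition_big (fun y => y i0) predT) //=.
transitivity (\sum_z f z * fibre_sum x Q z).
  by apply: eq_bigr => z _; rewrite mulr_sumr; apply: eq_bigr => y /andP[_ /eqP->].
rewrite (bigID (mem (lgen (x i0)))) /= [X in _ + X]big1 ?addr0; last first.
  by move=> z zx; rewrite fibre_sum_out ?mulr0.
rewrite (eq_bigr (fun z => f z * fibre_sum x Q (0 : R_ i0))); last first.
  by move=> z zx; rewrite (fibre_sum_lgen Q_off_i0).
by rewrite -mulr_suml f0 mul0r.
Qed.

Lemma support_lideal_gen x y :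
  y \in lideal_gen x -> [set i | y i != 0] \subset [set i | x i != 0].
Proof.
case/lideal_genP => r ->; apply/subsetP => i; rewrite !inE pmulE.
by apply: contra_neq => ->; rewrite mulr0.
Qed.

Lemma psocle_lideal_gen x y : (forall i, left_ideal (socle (R_ i))) ->
  y \in lideal_gen x -> x \in psocle R_ -> y \in psocle R_.
Proof.
move=> lsoc /lideal_genP[r ->]; rewrite !inE => /forallP xsoc.
by apply/forallP => i; rewrite pmulE; case: (left_idealP (lsoc i)) => _ _ ->.
Qed.

Section Weight.
Variable q : nat.
Hypothesis Hsoc : forall i, [/\ left_ideal (socle (R_ i)), #|socle (R_ i)| = q,
  (1 < q)%N & forall x : R_ i, x != 0 -> socle (R_ i) \subset lgen x].

Definition wcoef : rat := - ((q%:R - 1)^-1).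

Definition hom_weight a : rat := if a \in psocle R_ then 1 - wcoef ^+ hwt a else 1.

Definition soc_factor i (z : R_ i) : rat :=
  if z \in socle (R_ i) then (if z == 0 then 1 else wcoef) else 0.

Lemma socle0 i : (0 : R_ i) \in socle (R_ i).
Proof. by have [lsoc _ _ _] := Hsoc i; case: (left_idealP lsoc). Qed.

Lemma hom_weight_prod a : hom_weight a = 1 - \prod_i soc_factor (a i).
Proof.
rewrite /hom_weight; case: ifP => [|/negbT]; rewrite inE.
  move=> /forallP asoc; congr (1 - _).
  rewrite /hwt -prodr_const big_mkcond /=; apply: eq_bigr => i _.
  by rewrite inE /soc_factor asoc; case: eqP.
rewrite negb_forall => /existsP[i ai]; rewrite (bigD1 i) //=.
by rewrite /soc_factor (negPf ai) mul0r subr0.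
Qed.

(* On R x, x <> 0: the value 1 at 0 and wcoef at the q - 1 other points of the
   socle, which lies in R x, cancel. *)
Lemma sum_soc_factor i (x : R_ i) : x != 0 -> \sum_(z in lgen x) soc_factor z = 0.
Proof.
move=> x0; have [_ csoc q_gt1 soc_min] := Hsoc i.
rewrite (bigID (mem (socle (R_ i)))) /= [X in _ + X]big1 ?addr0; last first.
  by move=> z /andP[_ /negPf zsoc]; rewrite /soc_factor zsoc.
rewrite (eq_bigl (mem (socle (R_ i)))) => [|z]; last first.
  by rewrite /= andb_idl // => /(subsetP (soc_min x x0)).
rewrite (bigD1 0 (socle0 i)) /= (eq_bigr (fun _ => wcoef)) => [|z /andP[zsoc z0]]; last first.
  by rewrite /soc_factor (negPf z0) ifT.
rewrite sumr_const /soc_factor socle0 eqxx.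
have -> : #|[pred z in socle (R_ i) | z != 0]| = (q - 1)%N.
  by rewrite -csoc (cardsD1 0) socle0 addKn; apply: eq_card => z; rewrite !inE andbC.
have q1_neq0 : (q%:R - 1 : rat) != 0 by rewrite subr_eq0 pnatr_eq1 gtn_eqF.
by rewrite -mulr_natr natrB 1?ltnW // /wcoef mulNr mulVf // addrN.
Qed.

Lemma sum_prod_soc_factor x : x != pzero R_ ->
  \sum_(y in lideal_gen x) \prod_i soc_factor (y i) = 0.
Proof.
move=> x0; have [i0 xi0] : exists i0, x i0 != 0.
  apply/existsP; apply: contraNT x0 => /existsPn x_0; apply/eqP/ffunP => i.
  by rewrite ffunE; apply/eqP; move: (x_0 i); rewrite negbK.
under eq_bigr do rewrite (bigD1 i0) //=.
apply: sum_lideal_gen_factor; last exact: sum_soc_factor.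
by move=> y y' yy'; apply: eq_bigr => j /yy' ->.
Qed.

Lemma hom_weight_normalized : normalized_homogeneous_weight hom_weight.
Proof.
have lsoc i : left_ideal (socle (R_ i)) by have [] := Hsoc i.
split.
- rewrite hom_weight_prod big1 ?subrr // => i _.
  by rewrite ffunE /soc_factor socle0 eqxx.
- move=> x y Lxy; have xLy : x \in lideal_gen y by rewrite -Lxy lideal_gen_self.
  have yLx : y \in lideal_gen x by rewrite Lxy lideal_gen_self.
  have supp : [set i | x i != 0] = [set i | y i != 0].
    by apply/eqP; rewrite eqEsubset !support_lideal_gen.
  have soc : (x \in psocle R_) = (y \in psocle R_).
    by apply/idP/idP; apply: psocle_lideal_gen.
  by rewrite /hom_weight /hwt supp soc.
- move=> x x0; under eq_bigr do rewrite hom_weight_prod.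
  by rewrite sumrB sum_prod_soc_factor // subr0 sumr_const.
Qed.

End Weight.

End Product.

Unset Implicit Arguments.

Theorem proposition3p8 (t : nat) (R_ : 'I_t -> finNzRingType) (q : nat)
  (M_ : forall i : 'I_t, {set R_ i})
  (Hloc : forall i, local_with_max (M_ i))
  (Hfrob : forall i, frobenius (R_ i))
  (Hres : forall i, #|[set: R_ i]|%N = (q * #|M_ i|)%N) :
  let w := fun a : prodR R_ =>
    if a \in psocle R_ then 1 - (- ((q%:R - 1)^-1)) ^+ hwt a else (1 : rat) in
  normalized_homogeneous_weight w /\
  (forall w', normalized_homogeneous_weight w' -> forall a, w' a = w a).
Proof.
move=> w; have Hsoc i : [/\ left_ideal (socle (R_ i)), #|socle (R_ i)| = q,
    (1 < q)%N & forall x : R_ i, x != 0 -> socle (R_ i) \subset lgen x].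
  by have [chi Hchi] := Hfrob i; apply: local_frobenius_socle (Hloc i) Hchi (Hres i).
have w_normalized : normalized_homogeneous_weight w := hom_weight_normalized Hsoc.
split => // w' w'_normalized a.
exact: normalized_homogeneous_weight_unique w'_normalized w_normalized a.
Qed.
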